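(* Let $p\ge 3$ be prime and $s\ge 0$, and let $m=(p,p,\dots,p)$ (with $s+1$ entries). Then the Gabor–Steiner ETF $\mathcal{G}(m)$ is a set of roux lines.
   Context: Let $A=\bigoplus_{\ell=0}^s\mathbb{Z}_p$, $|m|=p^{s+1}$, and fix a primitive $p$-th root of unity $\zeta_p$. Let $T_p$ be the $p\times p$ circulant matrix with first row $(0,1,0,\dots,0)$ and $M_p=\mathrm{diag}(1,\zeta_p,\dots,\zeta_p^{p-1})$. For $k,\kappa\in A$ put $T^{(k)}=\bigotimes_{\ell=0}^sT_p^{k_\ell}$, $M^{(\kappa)}=\bigotimes_{\ell=0}^sM_p^{\kappa_\ell}$ (Kronecker products), and $\pi(k,\kappa)=I_{(|m|-1)/2}\otimes(M^{(\kappa)}T^{(k)})$. Index coordinates of $\mathbb{C}^{|m|}$ by $A$ in lexicographic order. Let $\mathcal{I}$ be the first $(|m|-1)/2$ elements of $A$ in lexicographic order; for $i\in\mathcal{I}$ let $\phi_i\in\mathbb{C}^{|m|}$ have entry $1$ at index $i$, entry $-1$ at index $-i-\mathbb{1}$ (computed in $A$, $\mathbb{1}=(1,\dots,1)$), and $0$ elsewhere; let $\psi$ be the stacking of the $\phi_i$ in lexicographic order. Then $\mathcal{G}(m)=\{\pi(k,\kappa)\psi:(k,\kappa)\in A\times A\}$, a family of $|m|^2$ vectors of equal norm $\nu$ with pairwise inner products of constant absolute value $\alpha>0$ (an equiangular tight frame up to scaling). Its signature matrix is $(\Phi^*\Phi-\nu^2I)/\alpha$, and a normalized signature matrix is the signature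 matrix of a family $\{c_x\varphi_x\}$ with unimodular $c_x$ whose first row and column (indexed by $(0,0)$) have all off-diagonal entries equal to $1$. Roux lines are the complex analogue of regular two-graphs introduced by Iverson and Mixon via association-scheme axioms on the Gram matrix; by their criterion (Iverson–Mixon, Corollary 4.6), a normalized signature matrix $\overline{S}$ corresponds to equal-norm representatives of roux lines if and only if (1) all entries of $\overline{S}$ are roots of unity and (2) for every positive integer $N$ the Hadamard power $\overline{S}^{\circ N}$ (entrywise $N$-th power) has exactly two distinct eigenvalues. *)

From HB Require Import structures.
From mathcomp Require Import all_boot all_order all_algebra all_field.
Set Implicit Arguments. Unset Strict Implicit. Unset Printing Implicit Defensive.
Import Order.TTheory GRing.Theory Num.Theory.
Local Open Scope ring_scope.

Definition A (p s : nat) := {ffun 'I_s.+1 -> 'Z_p}.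

(* rank of j in the lexicographic order (coordinate 0 most significant) *)
Definition lexrank (p s : nat) (j : A p s) : nat :=
  (\sum_(l < s.+1) (val (j l)) * p ^ (s - l))%N.

Definition one_vec (p s : nat) : A p s := [ffun => 1].

(* I = first (|m|-1)/2 elements of A in lexicographic order, |m| = p^(s+1) *)
Definition inI (p s : nat) (i : A p s) : bool :=
  (lexrank i < (p ^ s.+1).-1 %/ 2)%N.

Definition Iset (p s : nat) := {i : A p s | inI i}.

Definition Tp (p : nat) : 'M[algC]_((Zp_trunc p).+2) :=
  \matrix_(a, b) ((b == (a : 'Z_p) + 1)%:R).
Definition Mp (p : nat) (z : algC) : 'M[algC]_((Zp_trunc p).+2) :=
  \matrix_(a, b) ((a == b)%:R * z ^+ (val a)).

(* Kronecker product  F 0 (x) F 1 (x) ... (x) F s, indexed by A in lexicographic order *)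
Definition kron (p s : nat) (F : 'I_s.+1 -> 'M[algC]_((Zp_trunc p).+2))
  (j j' : A p s) : algC := \prod_(l < s.+1) F l (j l) (j' l).

Definition Tk (p s : nat) (k : A p s) := kron (fun l => Tp p ^+ val (k l)).
Definition Mk (p s : nat) (z : algC) (kap : A p s) :=
  kron (fun l => Mp p z ^+ val (kap l)).

Definition MT (p s : nat) (z : algC) (k kap : A p s) (j j' : A p s) : algC :=
  \sum_(j'' : A p s) Mk z kap j j'' * Tk k j'' j'.

Definition phi (p s : nat) (i : A p s) (j : A p s) : algC :=
  if j == i then 1 else if j == - i - one_vec p s then -1 else 0.

(* vectors of C^((|m|-1)/2 * |m|) are indexed by I x A (block i, coordinate j);
   pi(k,kappa) psi = (I (x) M^kappa T^k) psi, block i is M^kappa T^k phi_i *)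
Definition gabor (p s : nat) (z : algC) (x : A p s * A p s)
  (v : Iset p s * A p s) : algC :=
  \sum_(j' : A p s) MT z x.1 x.2 v.2 j' * phi (val v.1) j'.

Definition gram (X V : finType) (Phi : X -> V -> algC) (x y : X) : algC :=
  \sum_(v : V) (Phi x v)^* * Phi y v.

Definition sigmat (X V : finType) (Phi : X -> V -> algC) (nu2 alpha : algC)
  (x y : X) : algC := (gram Phi x y - (x == y)%:R * nu2) / alpha.

Definition hadamard_pow (X : finType) (S : X -> X -> algC) (N : nat) :=
  fun x y => S x y ^+ N.

Definition to_mx (X : finType) (S : X -> X -> algC) : 'M[algC]_#|X| :=
  \matrix_(i, j) S (enum_val i) (enum_val j).

Definition two_eigenvalues (n : nat) (M : 'M[algC]_n) : Prop :=
  exists a b : algC, a != b /\ forall l, eigenvalue M l = (l == a) || (l == b).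

Definition root_of_unity (c : algC) : Prop := exists n : nat, (0 < n)%N /\ c ^+ n = 1.

(* Phi is an equal-norm equiangular family (norm^2 nu2, |inner products| alpha > 0)
   and, via the Iverson-Mixon criterion (Cor. 4.6), some normalized signature
   matrix (rows/columns indexed by x0) has root-of-unity off-diagonal entries and
   all Hadamard powers have exactly two distinct eigenvalues. *)
Definition roux_lines (X V : finType) (x0 : X) (Phi : X -> V -> algC) : Prop :=
  exists nu2 alpha : algC,
    0 < alpha /\
    (forall x, gram Phi x x = nu2) /\
    (forall x y, x != y -> `|gram Phi x y| = alpha) /\
    exists c : X -> algC,
      (forall x, `|c x| = 1) /\
      let Sb := sigmat (fun x v => c x * Phi x v) nu2 alpha in
      (forall y, y != x0 -> Sb x0 y = 1 /\ Sb y x0 = 1) /\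
      (forall x y, x != y -> root_of_unity (Sb x y)) /\
      (forall N : nat, (0 < N)%N -> two_eigenvalues (to_mx (hadamard_pow Sb N))).

From mathcomp Require Import all_boot all_order all_algebra all_field zify ring.
Set Implicit Arguments. Unset Strict Implicit. Unset Printing Implicit Defensive.
Import Order.TTheory GRing.Theory Num.Theory.
Local Open Scope ring_scope.

(* Write x = (k, kappa) in A * A, n = |A| = p^(s+1) and chi t = z^t.  The frame
   vector of x has entries chi <j, kappa> * phi_i (j + k).  The reflection
   mirror u = - u - 1 satisfies lexrank (mirror u) + lexrank u = n - 1, so it swaps
   I with the last (n - 1)/2 points of A and fixes only the middle one; hence
   sum_(i in I) phi_i u * phi_i v = [u = v] - [v = mirror u], and the Gram matrix is
   n [x = y] - chi <j0, kappa' - kappa>, where j0 is the unique solution of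
   j + k' = mirror (j + k) (2 is invertible as p is odd).  This phase splits as
   phase y - phase x + hsymp x y, with hsymp = -1/2 times the standard symplectic
   form, so rescaling the vector of x by sgn x * chi (- phase x) (sgn 0 = 1, sgn x = -1
   otherwise) gives the normalized signature matrix, equal off the diagonal to
   - sgn x * sgn y * chi (hsymp x y).  Its N-th Hadamard power is (-1)^N (W_N - 1)
   with W_N x y = (sgn x * sgn y)^N chi (N hsymp x y), and orthogonality of characters
   gives W_N^2 = n^2 W_N when p divides N and W_N^2 = n^2 otherwise (the symplectic
   form is nondegenerate).  Either way the Hadamard power is annihilated by a
   quadratic with two distinct roots and neither factor vanishes, so it has exactly
   two eigenvalues. *)

Lemma digits_inj (b n : nat) (f g : nat -> nat) :
  (forall l, l < n -> f l < b /\ g l < b)%N ->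
  (\sum_(l < n) f l * b ^ l = \sum_(l < n) g l * b ^ l)%N ->
  forall l, (l < n)%N -> f l = g l.
Proof.
elim: n f g => [//|n IH] f g fg_lt.
rewrite !big_ord_recl /= !expn0 !muln1.
under eq_bigr => i _ do rewrite expnS mulnCA.
under [in X in _ = X -> _]eq_bigr => i _ do rewrite expnS mulnCA.
rewrite -!big_distrr /= => E.
have [f0 g0] := fg_lt 0%N isT.
have fg0 : f 0%N = g 0%N.
  have := congr1 (modn^~ b) E.
  by rewrite ![(_ + b * _)%N]addnC ![(b * _)%N]mulnC !modnMDl !modn_small.
have b_gt0 : (0 < b)%N by apply: leq_ltn_trans f0.
move: E; rewrite fg0 => /addnI /eqP; rewrite eqn_mul2l gtn_eqF //= => /eqP E.
case=> [//|l] lt_ln; apply: (IH (f \o S) (g \o S)) => //.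
by move=> l' lt_l'n; apply: fg_lt.
Qed.

Section QuadraticEigenvalues.

Variables (F : fieldType) (n : nat) (M : 'M[F]_n).

Lemma eigenvalue_of_annihilator a b :
  (M - b%:M) *m (M - a%:M) = 0 -> M - b%:M != 0 -> eigenvalue M a.
Proof.
move=> Mab0 /eqP Mb_neq0; apply/eigenvalueP.
have [i Mbi] : exists i, row i (M - b%:M) != 0.
  apply/existsP; apply: contra_notT Mb_neq0; rewrite negb_exists => /forallP Mb0.
  by apply/row_matrixP => i; rewrite row0; apply/eqP; rewrite -[_ == _]negbK Mb0.
exists (row i (M - b%:M)) => //.
apply/eqP; rewrite -subr_eq0 -mul_mx_scalar -mulmxBr.
by rewrite -row_mul Mab0 row0.
Qed.

Lemma eigenvalue_quadratic a b :
  (M - a%:M) *m (M - b%:M) = 0 -> M - a%:M != 0 -> M - b%:M != 0 ->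
  forall l, eigenvalue M l = (l == a) || (l == b).
Proof.
move=> Mab0 Ma_neq0 Mb_neq0 l; apply/idP/idP.
  case/eigenvalueP => v Mv v_neq0.
  have Mc c : v *m (M - c%:M) = (l - c) *: v.
    by rewrite mulmxBr mul_mx_scalar Mv scalerBl.
  have : v *m ((M - a%:M) *m (M - b%:M)) = 0 by rewrite Mab0 mulmx0.
  rewrite mulmxA Mc -scalemxAl Mc scalerA => /eqP.
  by rewrite scaler_eq0 (negbTE v_neq0) orbF mulf_eq0 !subr_eq0.
have Mba0 : (M - b%:M) *m (M - a%:M) = 0.
  have cMa : comm_mx M (M - a%:M).
    exact: comm_mxD (comm_mx_refl M) (comm_mxN (comm_mx_scalar a M)).
  rewrite -Mab0; apply/esym/comm_mxD; first exact: comm_mx_sym.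
  exact: comm_mxN (comm_mx_scalar b _).
case/orP => /eqP ->; first exact: eigenvalue_of_annihilator Mba0 Mb_neq0.
exact: eigenvalue_of_annihilator Mab0 Ma_neq0.
Qed.

End QuadraticEigenvalues.

Lemma two_eigenvalues_affine m (M : 'M[algC]_m) (eps a b : algC) :
  eps != 0 -> a != b -> (M - a%:M) *m (M - b%:M) = 0 -> M - a%:M != 0 -> M - b%:M != 0 ->
  two_eigenvalues (eps *: (M - 1%:M)).
Proof.
move=> eps_neq0 ab Mab0 Ma_neq0 Mb_neq0.
have shift c : eps *: (M - 1%:M) - (eps * (c - 1))%:M = eps *: (M - c%:M).
  by rewrite -scale_scalar_mx -scalerBr (raddfB (@scalar_mx _ m)) opprB addrA subrK.
exists (eps * (a - 1)), (eps * (b - 1)); split.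
  by rewrite (inj_eq (mulfI eps_neq0)) (inj_eq (addIr _)).
apply: eigenvalue_quadratic; rewrite !shift ?scalemx_eq0 ?negb_or ?eps_neq0 //.
by rewrite -scalemxAl -scalemxAr Mab0 !scaler0.
Qed.

Section FunctionMatrices.

Variable X : finType.

Lemma to_mx_mul (F G : X -> X -> algC) :
  to_mx F *m to_mx G = to_mx (fun x y => \sum_w F x w * G w y).
Proof.
apply/matrixP => i j; rewrite !mxE.
under eq_bigr => k _ do rewrite !mxE.
by rewrite -(big_enum_val (fun w => F (enum_val i) w * G w (enum_val j))).
Qed.

Lemma to_mx_sub_scalar_neq0 (F : X -> X -> algC) x y c :
  x != y -> F x y != 0 -> to_mx F - c%:M != 0.
Proof.
move=> xy Fxy; apply/eqP => /matrixP /(_ (enum_rank x) (enum_rank y)).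
rewrite !mxE !enum_rankK (inj_eq enum_rank_inj) (negbTE xy) mulr0n subr0.
by move/eqP; rewrite (negbTE Fxy).
Qed.

End FunctionMatrices.

Lemma gram_scale (X V : finType) (Phi : X -> V -> algC) (c : X -> algC) x y :
  gram (fun x v => c x * Phi x v) x y = (c x)^* * c y * gram Phi x y.
Proof.
rewrite /gram mulr_sumr; apply: eq_bigr => v _.
by rewrite rmorphM /= mulrACA.
Qed.

Section DotProduct.

Variables (R : comUnitRingType) (I : finType).
Implicit Types a b c : {ffun I -> R}.

Definition dot a b : R := \sum_i a i * b i.

Definition scalef (k : R) a : {ffun I -> R} := [ffun i => k * a i].

Lemma dotC a b : dot a b = dot b a.
Proof. by apply: eq_bigr => i _; rewrite mulrC. Qed.

Lemma dotDl a b c : dot (a + b) c = dot a c + dot b c.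
Proof. by rewrite /dot -big_split; apply: eq_bigr => i _; rewrite ffunE mulrDl. Qed.

Lemma dotNl a b : dot (- a) b = - dot a b.
Proof. by rewrite /dot -sumrN; apply: eq_bigr => i _; rewrite ffunE mulNr. Qed.

Lemma dotBl a b c : dot (a - b) c = dot a c - dot b c.
Proof. by rewrite dotDl dotNl. Qed.

Lemma dot0l a : dot 0 a = 0.
Proof. by rewrite /dot big1 // => i _; rewrite ffunE mul0r. Qed.

Lemma dotZl k a b : dot (scalef k a) b = k * dot a b.
Proof. by rewrite /dot mulr_sumr; apply: eq_bigr => i _; rewrite ffunE mulrA. Qed.

Lemma dotDr a b c : dot a (b + c) = dot a b + dot a c.
Proof. by rewrite !(dotC a) dotDl. Qed.

Lemma dotNr a b : dot a (- b) = - dot a b.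
Proof. by rewrite !(dotC a) dotNl. Qed.

Lemma dotBr a b c : dot a (b - c) = dot a b - dot a c.
Proof. by rewrite dotDr dotNr. Qed.

Lemma dot0r a : dot a 0 = 0.
Proof. by rewrite dotC dot0l. Qed.

Lemma scalef_eq0 k a : k \is a GRing.unit -> (scalef k a == 0) = (a == 0).
Proof.
move=> k_unit; apply/eqP/eqP => [ka0|->]; apply/ffunP => i.
  apply: (mulrI k_unit); have /ffunP/(_ i) := ka0.
  by rewrite !ffunE mulr0.
by rewrite !ffunE mulr0.
Qed.

End DotProduct.

Section Indicators.

Variable T : finType.

Lemma sum_delta_cond (R : pzSemiRingType) (P : pred T) (a : T) (G : T -> R) :
  \sum_(i | P i) (a == i)%:R * G i = (P a)%:R * G a.
Proof.
rewrite big_mkcond (bigD1 a) //= eqxx mul1r big1 ?addr0.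
  by case: (P a); rewrite ?mul1r ?mul0r.
by move=> i /negbTE; rewrite eq_sym => ->; case: (P i); rewrite ?mul0r.
Qed.

Lemma sum_delta (R : pzSemiRingType) (a : T) (G : T -> R) : \sum_i (a == i)%:R * G i = G a.
Proof. by rewrite sum_delta_cond mul1r. Qed.

Lemma prod_eq_ffun (R : comPzSemiRingType) (I : finType) (u v : {ffun I -> T}) :
  \prod_i (u i == v i)%:R = (u == v)%:R :> R.
Proof.
have [->|/eqP uv] := eqVneq u v; first by rewrite big1 // => i _; rewrite eqxx.
have [i uvi] : exists i, u i != v i.
  apply/existsP; apply: contra_notT uv; rewrite negb_exists => /forallP uv.
  by apply/ffunP => i; apply/eqP/negPn.
by rewrite (bigD1 i) //= (negbTE uvi) mul0r.
Qed.

Lemma natr_pair_eq (R : pzSemiRingType) (T' : eqType) (x y : T * T') :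
  (x == y)%:R = (x.1 == y.1)%:R * (x.2 == y.2)%:R :> R.
Proof. by rewrite -pair_eqE /pair_eq /= -natrM mulnb. Qed.

End Indicators.

Section GaborFrame.

Variables (p s : nat) (z : algC).
Hypothesis p_gt1 : (1 < p)%N.
Hypothesis p_odd : odd p.
Hypothesis p_prime : prime p.
Hypothesis z_prim : p.-primitive_root z.

Local Notation Ap := (A p s).
Local Notation n := (p ^ s.+1)%N.

(** * The lexicographic order and the reflection u |-> - u - 1 *)

Lemma val_Zp_lt (a : 'Z_p) : (val a < p)%N.
Proof. by rewrite -[X in (_ < X)%N](Zp_cast p_gt1) ltn_ord. Qed.

Lemma lexrank_rev (u : Ap) : lexrank u = (\sum_(l < s.+1) val (u (rev_ord l)) * p ^ l)%N.
Proof.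
rewrite /lexrank (reindex_inj rev_ord_inj) /=; apply: eq_bigr => l _.
by rewrite subSS subKn // -ltnS.
Qed.

Lemma lexrank_inj : injective (@lexrank p s).
Proof.
move=> u v; rewrite !lexrank_rev => uv; apply/ffunP => l; apply: val_inj.
pose dig (w : Ap) (i : nat) := val (w (rev_ord (inord i))).
have dig_eq : forall i, (i < s.+1)%N -> dig u i = dig v i.
  apply: digits_inj; first by move=> i _; split; apply: val_Zp_lt.
  have digE w (i : 'I_s.+1) : dig w i = val (w (rev_ord i)) by rewrite /dig inord_val.
  by under eq_bigr => i _ do rewrite digE; under [in RHS]eq_bigr => i _ do rewrite digE.
by have := dig_eq (rev_ord l) (ltn_ord _); rewrite /dig inord_val rev_ordK.
Qed.

Definition mirror (u : Ap) : Ap := - u - one_vec p s.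

Lemma mirrorK : involutive mirror.
Proof. by move=> u; rewrite /mirror opprB opprK addrC addKr. Qed.

Lemma mirror_eq_sym u v : (u == mirror v) = (v == mirror u).
Proof. by apply/eqP/eqP => ->; rewrite mirrorK. Qed.

Lemma val_mirror u l : val (mirror u l) = (p.-1 - val (u l))%N.
Proof.
have u_lt : (val (u l) <= p.-1)%N by rewrite -ltnS prednK ?val_Zp_lt // ltnW.
have pred_p : (p.-1%:R : 'Z_p) = -1.
  by apply/eqP; rewrite -subr_eq0 opprK natr1 prednK ?pchar_Zp // ltnW.
have -> : mirror u l = (p.-1 - val (u l))%:R.
  by rewrite !ffunE natrB // natr_Zp pred_p addrC.
by rewrite -[val _]/(nat_of_ord _) val_Zp_nat // modn_small //; lia.
Qed.

Lemma lexrank_mirror u : (lexrank (mirror u) + lexrank u)%N = n.-1.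
Proof.
rewrite !lexrank_rev -big_split predn_exp big_distrr /=; apply: eq_bigr => l _.
by rewrite -mulnDl val_mirror subnK // -ltnS prednK ?val_Zp_lt // ltnW.
Qed.

Lemma half_pred_cardK : (n.-1 %/ 2 * 2)%N = n.-1.
Proof.
have n_odd : odd n by rewrite oddX p_odd orbT.
by rewrite -(odd_halfK n_odd) divn2 doubleK muln2.
Qed.

Lemma inI_mirror_neq i : inI i -> mirror i != i.
Proof.
rewrite /inI => i_lt; apply/eqP => si.
by have := lexrank_mirror i; rewrite si -half_pred_cardK; lia.
Qed.

Lemma inI_mirror u : mirror u != u -> inI (mirror u) = ~~ inI u.
Proof.
move=> su; have ne : lexrank (mirror u) != lexrank u.
  by apply: contra su => /eqP/lexrank_inj ->.
have := lexrank_mirror u; rewrite -half_pred_cardK /inI -leqNgt => E.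
by apply/idP/idP; lia.
Qed.

Lemma phiE i u : inI i -> phi i u = (i == u)%:R - (i == mirror u)%:R.
Proof.
move=> Ii; rewrite /phi -/(mirror i) (eq_sym u) mirror_eq_sym.
have [<-|_] := eqVneq i u; last by case: (i == mirror u); rewrite /= ?subr0 ?sub0r.
by rewrite eq_sym (negbTE (inI_mirror_neq Ii)) subr0.
Qed.

Lemma sum_Iset (F : Ap -> algC) : \sum_(i : Iset p s) F (val i) = \sum_(i | inI i) F i.
Proof. exact: esym (big_sub (@inI p s) F). Qed.

Lemma sum_phi_mul u v :
  \sum_(i : Iset p s) phi (val i) u * phi (val i) v = (u == v)%:R - (v == mirror u)%:R.
Proof.
rewrite (sum_Iset (fun i => phi i u * phi i v)).
under eq_bigr => i Ii do rewrite !phiE // !(eq_sym i) mulrBl.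
rewrite sumrB !sum_delta_cond (inj_eq (can_inj mirrorK)) (eq_sym (mirror v)) mirror_eq_sym.
rewrite (eq_sym v u).
have [su|su] := eqVneq (mirror u) u; first by rewrite su (eq_sym v u) !(subrr, mulr0).
by rewrite inI_mirror //; case: (inI u); rewrite ?mul1r ?mul0r ?subr0 ?sub0r ?opprB.
Qed.

(** * Characters of Z_p and of A *)

Definition chi (t : 'Z_p) : algC := z ^+ val t.

Lemma chi0 : chi 0 = 1.
Proof. by rewrite /chi expr0. Qed.

Lemma chi_nat k : chi k%:R = z ^+ k.
Proof. by rewrite /chi -[val _]/(nat_of_ord _) val_Zp_nat // (prim_expr_mod z_prim). Qed.

Lemma chi_val_mul (a b : 'Z_p) : z ^+ (val a * val b) = chi (a * b).
Proof. by rewrite -chi_nat natrM !natr_Zp. Qed.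

Lemma chiD a b : chi (a + b) = chi a * chi b.
Proof. by rewrite -{1}(natr_Zp a) -{1}(natr_Zp b) -natrD chi_nat exprD. Qed.

Lemma chiMn a N : chi (a *+ N) = chi a ^+ N.
Proof. by elim: N => [|N IH]; rewrite ?mulr0n ?chi0 // mulrS chiD IH exprS. Qed.

Lemma chi_eq1 a : (chi a == 1) = (a == 0).
Proof.
rewrite /chi -(prim_order_dvd z_prim); apply/idP/eqP => [p_a|->]; last exact: dvdn0.
apply: val_inj; have [//|a_gt0] := posnP (val a).
by have := leq_ltn_trans (dvdn_leq a_gt0 p_a) (val_Zp_lt a); rewrite ltnn.
Qed.

Lemma norm_chi a : `|chi a| = 1.
Proof.
have : `|chi a| ^+ p = 1.
  by rewrite -normrX /chi -exprM mulnC exprM (prim_expr_order z_prim) expr1n normr1.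
by move/eqP; rewrite pexpr_eq1 ?normr_ge0 -?lt0n ?(ltnW p_gt1) // => /eqP.
Qed.

Lemma conj_chi a : (chi a)^* = chi (- a).
Proof.
have chi_neq0 : chi a != 0 by rewrite -normr_eq0 norm_chi oner_eq0.
apply: (mulfI chi_neq0); rewrite -chiD subrr chi0.
by rewrite -normCK norm_chi expr1n.
Qed.

Lemma card_Ap : #|{: Ap}| = n.
Proof. by rewrite card_ffun !card_ord Zp_cast. Qed.

Lemma sum_chi_dot (a : Ap) : \sum_j chi (dot j a) = (a == 0)%:R * n%:R.
Proof.
have [->|/eqP a_neq0] := eqVneq a 0.
  under eq_bigr => j _ do rewrite dot0r chi0.
  by rewrite sumr_const card_Ap mul1r.
have [l al] : exists l, a l != 0.
  apply/existsP; apply: contra_notT a_neq0; rewrite negb_exists => /forallP a0.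
  by apply/ffunP => l; rewrite ffunE; apply/eqP/negPn.
pose e_l : Ap := [ffun l' => (l' == l)%:R].
have dot_e_l : dot e_l a = a l.
  rewrite /dot (bigD1 l) //= big1 ?addr0 => [|l' /negbTE l'l]; rewrite ffunE ?eqxx ?mul1r //.
  by rewrite l'l mul0r.
set S := \sum_j _.
have S_chi : S = S * chi (a l).
  rewrite {1}/S (reindex_inj (addIr e_l)) mulr_suml; apply: eq_bigr => j _.
  by rewrite dotDl chiD dot_e_l.
have : S * (1 - chi (a l)) = 0 by rewrite mulrBr mulr1 -S_chi subrr.
move/eqP; rewrite mulf_eq0 subr_eq0 (eq_sym 1) chi_eq1 (negbTE al) orbF => /eqP ->.
by rewrite mul0r.
Qed.

(** * The Gram matrix *)

Lemma Mp_exprE k (a b : 'Z_p) : (Mp p z ^+ k) a b = (a == b)%:R * z ^+ (val a * k).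
Proof.
elim: k a b => [|k IH] a b; first by rewrite muln0 mxE mulr1.
rewrite exprSr -mulmxE mxE; under eq_bigr => c _ do rewrite IH mxE -mulrA.
by rewrite (sum_delta (T := 'I_(Zp_trunc p).+2)) mulrCA -exprD mulnS addnC.
Qed.

Lemma Tp_exprE k (a b : 'Z_p) : (Tp p ^+ k) a b = (b == a + k%:R)%:R.
Proof.
elim: k a b => [|k IH] a b; first by rewrite addr0 mxE eq_sym.
rewrite exprSr -mulmxE mxE; under eq_bigr => c _ do rewrite IH mxE eq_sym.
by rewrite (sum_delta (T := 'I_(Zp_trunc p).+2)) -natr1 addrA.
Qed.

Lemma MTE (k kap j j' : Ap) : MT z k kap j j' = chi (dot j kap) * (j + k == j')%:R.
Proof.
have Mk_E j'' : Mk z kap j j'' = (j == j'')%:R * chi (dot j kap).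
  rewrite /Mk /kron; under eq_bigr => l _ do rewrite Mp_exprE chi_val_mul.
  by rewrite big_split /= prod_eq_ffun (big_morph chi chiD chi0).
have Tk_E j'' : Tk k j'' j' = (j'' + k == j')%:R.
  rewrite /Tk /kron -prod_eq_ffun; apply: eq_bigr => l _.
  by rewrite Tp_exprE natr_Zp !ffunE eq_sym.
rewrite /MT; under eq_bigr => j'' _ do rewrite Mk_E Tk_E -mulrA.
by rewrite sum_delta.
Qed.

Lemma gaborE (x : Ap * Ap) (v : Iset p s * Ap) :
  gabor z x v = chi (dot v.2 x.2) * phi (val v.1) (v.2 + x.1).
Proof.
by rewrite /gabor; under eq_bigr => j' _ do rewrite MTE -mulrA; rewrite -mulr_sumr sum_delta.
Qed.

Definition half : 'Z_p := 2%:R^-1.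

Lemma unit_Zp2 : (2%:R : 'Z_p) \is a GRing.unit.
Proof. by rewrite unitZpE // coprime_sym coprime2n p_odd. Qed.

Definition mirror_shift (x y : Ap * Ap) : Ap := scalef (- half) (x.1 + y.1 + one_vec p s).

Lemma mirror_shift_eq j x y : (j + y.1 == mirror (j + x.1)) = (j == mirror_shift x y).
Proof.
have -> : (j + y.1 == mirror (j + x.1)) = (scalef 2%:R (j - mirror_shift x y) == 0).
  rewrite -subr_eq0; congr (_ == 0); apply/ffunP => l.
  by rewrite !ffunE mulrBr mulrA mulrN mulrV ?unit_Zp2 //; ring.
by rewrite scalef_eq0 ?unit_Zp2 // subr_eq0.
Qed.

Lemma conj_phi (i u : Ap) : (phi i u)^* = phi i u.
Proof.
by rewrite /phi; case: ifP => _; [|case: ifP => _]; rewrite ?rmorphN ?rmorph1 ?rmorph0.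
Qed.

Lemma gramE (x y : Ap * Ap) :
  gram (gabor z) x y = (x == y)%:R * n%:R - chi (dot (mirror_shift x y) (y.2 - x.2)).
Proof.
pose F (i : Iset p s) j := (chi (dot j x.2) * phi (val i) (j + x.1))^* *
                           (chi (dot j y.2) * phi (val i) (j + y.1)).
have inner j : \sum_i F i j =
    ((x.1 == y.1)%:R - (mirror_shift x y == j)%:R) * chi (dot j (y.2 - x.2)).
  rewrite /F; under eq_bigr => i _ do rewrite rmorphM /= conj_phi conj_chi mulrACA -chiD.
  rewrite -mulr_sumr sum_phi_mul (inj_eq (addrI j)) mirror_shift_eq.
  by rewrite dotBr addrC (eq_sym j) mulrC.
rewrite /gram; under eq_bigr => v _ do rewrite !gaborE.
rewrite -(pair_bigA _ F) exchange_big /=.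
under eq_bigr => j _ do rewrite inner mulrBl.
rewrite sumrB -mulr_sumr sum_chi_dot sum_delta.
by rewrite subr_eq0 (eq_sym y.2) mulrA -natr_pair_eq.
Qed.

Definition symp (x y : Ap * Ap) : 'Z_p := dot x.1 y.2 - dot y.1 x.2.

Lemma sympxx x : symp x x = 0.
Proof. exact: subrr. Qed.

Lemma symp0x y : symp 0 y = 0.
Proof. by rewrite /symp dot0l dot0r subrr. Qed.

Lemma sympx0 y : symp y 0 = 0.
Proof. by rewrite /symp dot0l dot0r subrr. Qed.

Lemma symp_chain x y w : symp x y + symp y w = symp (x - w) y.
Proof. by rewrite /symp /= dotBl dotBr; ring. Qed.

Definition phase (x : Ap * Ap) : 'Z_p := - half * (dot x.1 x.2 + dot (one_vec p s) x.2).

Definition hsymp x y : 'Z_p := - half * symp x y.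

Lemma dot_mirror_shift x y :
  dot (mirror_shift x y) (y.2 - x.2) = phase y - phase x + hsymp x y.
Proof.
rewrite /mirror_shift dotZl /phase /hsymp /symp !dotDl !dotBr (dotC y.1 x.2); ring.
Qed.

(** * The normalized signature matrix and its Hadamard powers *)

Definition sgn (x : Ap * Ap) : algC := if x == 0 then 1 else -1.

Definition ncoef x : algC := sgn x * chi (- phase x).

Lemma sgnMK x : sgn x * sgn x = 1.
Proof. by rewrite /sgn; case: ifP; rewrite ?mulrNN mulr1. Qed.

Lemma conj_sgn x : (sgn x)^* = sgn x.
Proof. by rewrite /sgn; case: ifP; rewrite ?rmorphN rmorph1. Qed.

Lemma norm_ncoef x : `|ncoef x| = 1.
Proof. by rewrite normrM norm_chi mulr1 /sgn; case: ifP; rewrite ?normrN normr1. Qed.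

Local Notation Sig := (sigmat (fun x v => ncoef x * gabor z x v) (n%:R - 1) 1).

Lemma SigE x y : Sig x y = if x == y then 0 else - (sgn x * sgn y) * chi (hsymp x y).
Proof.
rewrite /sigmat divr1 gram_scale gramE; have [<-|xy] := eqVneq x y.
  by rewrite subrr dot0r chi0 [(ncoef x)^* * _]mulrC -normCK norm_ncoef expr1n !mul1r subrr.
rewrite !mul0r sub0r subr0 dot_mirror_shift /ncoef rmorphM /= conj_sgn conj_chi opprK.
rewrite mulrN mulNr mulrACA -!mulrA -!chiD.
by have -> : phase x + (- phase y + (phase y - phase x + hsymp x y)) = hsymp x y by ring.
Qed.

Definition Wmx N x y : algC := (sgn x * sgn y) ^+ N * chi (N%:R * hsymp x y).

Lemma hadamard_pow_SigE N x y : (0 < N)%N ->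
  hadamard_pow Sig N x y = (-1) ^+ N * (Wmx N x y - (x == y)%:R).
Proof.
move=> N_gt0; rewrite /hadamard_pow SigE /Wmx; have [<-|_] := eqVneq x y.
  by rewrite expr0n (gtn_eqF N_gt0) /hsymp sympxx !mulr0 chi0 sgnMK expr1n mulr1 subrr mulr0.
by rewrite subr0 mulNr mulr_natl chiMn -exprMn -exprNn.
Qed.

Lemma sum_chi_symp c u : c \is a GRing.unit ->
  \sum_y chi (c * symp u y) = (u == 0)%:R * (n ^ 2)%:R.
Proof.
case: u => u1 u2 c_unit; rewrite /symp /=.
have split_chi y1 y2 : chi (c * (dot u1 y2 - dot y1 u2)) =
    chi (dot y1 (scalef (- c) u2)) * chi (dot y2 (scalef c u1)).
  rewrite -chiD (dotC y1 (scalef _ _)) (dotC y2 (scalef _ _)) !dotZl.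
  by rewrite (dotC y1); congr chi; ring.
rewrite -(pair_bigA _ (fun y1 y2 => chi (c * (dot u1 y2 - dot y1 u2)))) /=.
under eq_bigr => y1 _ do under eq_bigr => y2 _ do rewrite split_chi.
under eq_bigr => y1 _ do rewrite -mulr_sumr sum_chi_dot.
rewrite -mulr_suml sum_chi_dot !scalef_eq0 ?unitrN // natr_pair_eq /=.
by rewrite [(n ^ 2)%:R]natrX; ring.
Qed.

Lemma natr_Zp_dvd N : (p %| N)%N -> (N%:R : 'Z_p) = 0.
Proof. by move=> /dvdnP[k ->]; rewrite natrM pchar_Zp // mulr0. Qed.

Lemma Wmx_dvd N x y : (p %| N)%N -> Wmx N x y = (sgn x * sgn y) ^+ N.
Proof. by move=> pN; rewrite /Wmx natr_Zp_dvd // mul0r chi0 mulr1. Qed.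

Lemma sum_Wmx_mul N x w :
  \sum_y Wmx N x y * Wmx N y w =
    (sgn x * sgn w) ^+ N * \sum_y chi (N%:R * - half * symp (x - w) y).
Proof.
rewrite mulr_sumr; apply: eq_bigr => y _.
have sgn_mid : sgn x * sgn y * (sgn y * sgn w) = sgn x * sgn w.
  by rewrite -mulrA (mulrA (sgn y)) sgnMK mul1r.
rewrite /Wmx mulrACA -exprMn sgn_mid -chiD /hsymp -!mulrDr.
by rewrite symp_chain mulrA.
Qed.

Lemma Wmx_sqr_dvd N : (p %| N)%N ->
  to_mx (Wmx N) *m to_mx (Wmx N) = (n ^ 2)%:R *: to_mx (Wmx N).
Proof.
move=> pN; rewrite to_mx_mul; apply/matrixP => i j; rewrite !mxE sum_Wmx_mul Wmx_dvd //.
under eq_bigr => y _ do rewrite natr_Zp_dvd // !mul0r chi0.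
by rewrite sumr_const card_prod card_Ap mulnn mulrC.
Qed.

Lemma Wmx_sqr_ndvd N : ~~ (p %| N)%N -> to_mx (Wmx N) *m to_mx (Wmx N) = (n ^ 2)%:R%:M.
Proof.
move=> pN; rewrite to_mx_mul; apply/matrixP => i j; rewrite !mxE sum_Wmx_mul sum_chi_symp.
  rewrite subr_eq0 (inj_eq enum_val_inj); have [<-|_] := eqVneq i j.
    by rewrite sgnMK expr1n !mul1r mulr1n.
  by rewrite mul0r mulr0 mulr0n.
by rewrite unitrM unitrN /half unitrV unit_Zp2 andbT unitZpE // prime_coprime.
Qed.

Lemma Wmx_neq0 N x y : Wmx N x y != 0.
Proof.
rewrite -normr_eq0 /Wmx normrM normrX normrM norm_chi /sgn.
by do 2 case: ifP => _; rewrite ?normrN normr1 !mulr1 expr1n oner_eq0.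
Qed.

Lemma to_mx_hadamard_pow N : (0 < N)%N ->
  to_mx (hadamard_pow Sig N) = (-1) ^+ N *: (to_mx (Wmx N) - 1%:M).
Proof.
move=> N_gt0; apply/matrixP => i j.
by rewrite !mxE hadamard_pow_SigE // (inj_eq enum_val_inj).
Qed.

Lemma two_eigenvalues_hadamard_pow N : (0 < N)%N ->
  two_eigenvalues (to_mx (hadamard_pow Sig N)).
Proof.
move=> N_gt0; rewrite to_mx_hadamard_pow //.
have W_sub_neq0 c : to_mx (Wmx N) - c%:M != 0.
  apply: (to_mx_sub_scalar_neq0 (x := (0 : Ap * Ap)) (y := (one_vec p s, 0))).
    rewrite eq_sym xpair_eqE negb_and; apply/orP; left.
    by apply/eqP => /ffunP/(_ ord0)/eqP; rewrite !ffunE oner_eq0.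
  exact: Wmx_neq0.
have sign_neq0 : (-1) ^+ N != 0 :> algC by rewrite expf_neq0 // oppr_eq0 oner_eq0.
have n_gt0 : (0 < n)%N by rewrite expn_gt0 (ltnW p_gt1).
have [pN|pN] := boolP (p %| N)%N.
  apply: (two_eigenvalues_affine (a := 0) (b := (n ^ 2)%:R)) => //.
    by rewrite eq_sym pnatr_eq0 -lt0n expn_gt0 n_gt0.
  by rewrite (raddf0 (@scalar_mx _ _)) subr0 mulmxBr (Wmx_sqr_dvd pN) mul_mx_scalar subrr.
apply: (two_eigenvalues_affine (a := n%:R) (b := - n%:R)) => //.
  by rewrite -subr_eq0 opprK -natrD pnatr_eq0 addn_eq0 andbb -lt0n.
rewrite (raddfN (@scalar_mx _ _)) opprK mulmxDr !mulmxBl (Wmx_sqr_ndvd pN) -scalar_mxM.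
by rewrite scalar_mxC addrA subrK -natrM mulnn subrr.
Qed.

Lemma Sig_border y : y != 0 -> Sig 0 y = 1 /\ Sig y 0 = 1.
Proof.
move=> y_neq0; rewrite !SigE (negbTE y_neq0) eq_sym (negbTE y_neq0) /hsymp symp0x sympx0.
by rewrite mulr0 chi0 /sgn eqxx (negbTE y_neq0) !mulr1 mul1r opprK.
Qed.

Lemma Sig_expr_2p x y : x != y -> Sig x y ^+ (2 * p) = 1.
Proof.
move=> xy; have p2_gt0 : (0 < 2 * p)%N by rewrite muln_gt0 (ltnW p_gt1).
have := hadamard_pow_SigE x y p2_gt0; rewrite /hadamard_pow => ->.
rewrite (negbTE xy) subr0 Wmx_dvd ?dvdn_mull // -exprMn mulN1r exprM sqrrN expr2.
by rewrite mulrACA !sgnMK mulr1 expr1n.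
Qed.

Lemma gabor_roux_lines : roux_lines (0 : Ap * Ap) (gabor z).
Proof.
exists (n%:R - 1), 1; split; first exact: ltr01.
split; first by move=> x; rewrite gramE eqxx subrr dot0r chi0 mul1r.
split; first by move=> x y xy; rewrite gramE (negbTE xy) mul0r sub0r normrN norm_chi.
exists ncoef; split; first exact: norm_ncoef.
split; first exact: Sig_border.
split; first by move=> x y xy; exists (2 * p)%N; rewrite muln_gt0 (ltnW p_gt1) Sig_expr_2p.
exact: two_eigenvalues_hadamard_pow.
Qed.

End GaborFrame.

Unset Implicit Arguments.

Theorem mainTheorem4 (p s : nat) (z : algC) :
  prime p -> (3 <= p)%N -> p.-primitive_root z ->
  roux_lines (0 : A p s * A p s) (gabor z).
Proof.
move=> p_prime p_ge3 z_prim; apply: gabor_roux_lines => //; first exact: prime_gt1.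
by case: (even_prime p_prime) => // p2; rewrite p2 in p_ge3.
Qed.
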